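(* There exist polynomials $P_0(z),P_1(z),P_2(z),\dots$ with $\deg P_{n-1}\le n$ for every $n\ge1$ such that for each integer $N\ge0$ \[ \frac{\operatorname{ali}(e^x)}{x e^x}=1+\sum_{n=1}^N\frac{P_{n-1}(\log x)}{x^n}+O\Bigl(\frac{\log^{N+1}x}{x^{N+1}}\Bigr),\qquad (x\to+\infty), \] where for $N=0$ the sum is understood to be $0$.
   Context: For real $x>1$, $\operatorname{li}(x)=\mathrm{p.v.}\int_0^x\frac{dt}{\log t}$; $\operatorname{li}$ is a strictly increasing bijection from $(1,+\infty)$ onto $\mathbb{R}$, and $\operatorname{ali}\colon\mathbb{R}\to(1,+\infty)$ denotes its inverse function, i.e. $\operatorname{li}(\operatorname{ali}(x))=x$. *)

From Stdlib Require Import Reals.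
From Coquelicot Require Import Coquelicot.
Open Scope R_scope.

(* Principal value integral li(x) = p.v. \int_0^x dt / log t, for x > 1:
   is_li x l  <->  lim_{eps -> 0+} ( \int_0^{1-eps} dt/log t + \int_{1+eps}^x dt/log t ) = l. *)
Definition is_li (x l : R) : Prop :=
  filterlim
    (fun eps : R => RInt (fun t => / ln t) 0 (1 - eps) + RInt (fun t => / ln t) (1 + eps) x)
    (at_right 0) (locally l).

Definition is_ali (ali : R -> R) : Prop :=
  forall y : R, 1 < ali y /\ is_li (ali y) y.

(* Polynomial P_m(y) = \sum_{k=0}^{m+1} a m k * y^k, of degree <= m+1. *)
Definition polyP (a : nat -> nat -> R) (m : nat) (y : R) : R :=
  sum_f_R0 (fun k => a m k * y ^ k) (S m).

Fixpoint asum (a : nat -> nat -> R) (x : R) (N : nat) : R :=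
  match N with
  | O => 0
  | S n => asum a x n + polyP a n (ln x) / x ^ (S n)
  end.

(* Put y = ali (e^x), so that li y = e^x, and write u = y / (x e^x) and
   D = ln y / x = 1 + ln x / x + (ln u) / x.  Repeated integration by parts gives
   li y = (y / ln y) sum_(k<K) k! / ln^k y + O(1) + O(y / ln^(K+1) y), which after division by
   e^x reads  1 = (u / D) sum_(k<K) k! (x D)^-k + O(e^-x) + O((x D)^-K).
   Thus u = D / sum_(k<K) k! (x D)^-k up to O((ln x / x)^K).  Since D depends on u only through
   (ln u) / x, an expansion of u in monomials (ln x / x)^a x^-b up to order N yields one up to
   order N + 1.  Grouping monomials by n = a + b gives P_(n-1)(ln x) / x^n with deg P_(n-1) <= n,
   and the coefficients do not depend on N: a sum sum_(n<=N, k) d_(n,k) ln^k x / x^n that is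
   O(ln^J x / x^(N+1)) has all its coefficients equal to zero. *)

From Stdlib Require Import Reals Lra Lia Psatz List Factorial ClassicalEpsilon.
From Coquelicot Require Import Coquelicot.
Open Scope R_scope.

Lemma ln_le_sub1 x : 0 < x -> ln x <= x - 1.
Proof. intros Hx. pose proof (exp_ineq1_le (ln x)) as H. rewrite exp_ln in H by lra. lra. Qed.

Lemma pow_le_fact_exp n z : 0 <= z -> z ^ n <= INR (fact n) * exp z.
Proof.
  intros Hz.
  assert (Hfact : 0 < INR (fact n)) by (apply lt_0_INR, lt_O_fact).
  assert (Hlast : z ^ n / INR (fact n) <= exp z).
  { eapply Rle_trans; [|apply (exp_ge_taylor z n Hz)].
    destruct n as [|n]; [apply Rle_refl|].
    rewrite tech5.
    assert (0 <= sum_f_R0 (fun k => z ^ k / INR (fact k)) n); [|lra].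
    apply cond_pos_sum. intros k. apply Rdiv_le_0_compat; [apply pow_le; lra|].
    apply lt_0_INR, lt_O_fact. }
  apply (Rmult_le_reg_r (/ INR (fact n))); [apply Rinv_0_lt_compat; lra|].
  replace (INR (fact n) * exp z * / INR (fact n)) with (exp z) by (field; lra).
  exact Hlast.
Qed.

Lemma pow_le_1 x n : 0 <= x <= 1 -> x ^ n <= 1.
Proof. intros Hx. rewrite <- (pow1 n). apply pow_incr. exact Hx. Qed.

Lemma pow_le_pow_le_1 x m n : 0 <= x <= 1 -> (m <= n)%nat -> x ^ n <= x ^ m.
Proof.
  intros Hx Hmn. replace n with (m + (n - m))%nat by lia. rewrite pow_add.
  pose proof (pow_le x m (proj1 Hx)). pose proof (pow_le x (n - m) (proj1 Hx)).
  pose proof (pow_le_1 x (n - m) Hx). nra.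
Qed.

Lemma exp_le x y : x <= y -> exp x <= exp y.
Proof. intros [H|H]; [left; apply exp_increasing; exact H | subst; lra]. Qed.

Lemma exp_neg_mul_exp x : exp (- x) * exp x = 1.
Proof. rewrite <- exp_plus. replace (- x + x) with 0 by ring. apply exp_0. Qed.

Lemma ln_pos_gt_1 z : 1 < z -> 0 < ln z.
Proof. intros H. rewrite <- ln_1. apply ln_increasing; lra. Qed.

(** * Asymptotic comparison at +oo *)

Definition ell (x : R) : R := ln x / x.

Definition ultimately (P : R -> Prop) : Prop := exists X, forall x, X <= x -> P x.

Definition bigO (f g : R -> R) : Prop := exists C, ultimately (fun x => Rabs (f x) <= C * g x).

Lemma ultimately_and (P Q : R -> Prop) :
  ultimately P -> ultimately Q -> ultimately (fun x => P x /\ Q x).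
Proof.
  intros [X1 H1] [X2 H2]. exists (Rmax X1 X2). intros x Hx. split.
  - apply H1. eapply Rle_trans; [apply Rmax_l | exact Hx].
  - apply H2. eapply Rle_trans; [apply Rmax_r | exact Hx].
Qed.

Lemma ultimately_mono (P Q : R -> Prop) :
  (forall x, P x -> Q x) -> ultimately P -> ultimately Q.
Proof. intros HPQ [X H]. exists X. auto. Qed.

Lemma ultimately_ge a : ultimately (fun x => a <= x).
Proof. exists a. auto. Qed.

Lemma ell_bounds x : exp 1 <= x -> 0 < x /\ 1 <= ln x /\ 0 < / x <= ell x /\ ell x <= 1.
Proof.
  intros Hx. pose proof (exp_ineq1_le 1).
  assert (Hx0 : 0 < x) by lra.
  assert (Hl : 1 <= ln x) by (rewrite <- (ln_exp 1); apply ln_le; [apply exp_pos | exact Hx]).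
  pose proof (ln_le_sub1 x Hx0). pose proof (Rinv_0_lt_compat x Hx0).
  unfold ell, Rdiv. repeat split; try lra; try nra.
  apply (Rmult_le_reg_r x); [lra|]. rewrite Rmult_assoc, Rinv_l by lra. lra.
Qed.

Lemma ultimately_ell_bounds :
  ultimately (fun x => 0 < x /\ 1 <= ln x /\ 0 < / x <= ell x /\ ell x <= 1).
Proof. exists (exp 1). exact ell_bounds. Qed.

Lemma ultimately_ell_le eps : 0 < eps -> ultimately (fun x => ell x <= eps).
Proof.
  intros He. exists (Rmax (exp 1) (exp (2 / eps))). intros x Hx.
  destruct (ell_bounds x (Rle_trans _ _ _ (Rmax_l _ _) Hx)) as (Hx0 & Hl & _).
  assert (Hle : 2 / eps <= ln x).
  { rewrite <- (ln_exp (2 / eps)). apply ln_le; [apply exp_pos|].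
    eapply Rle_trans; [apply Rmax_r | exact Hx]. }
  (* ln^2 x <= 2 x, hence ell x <= 2 / ln x *)
  pose proof (pow_le_fact_exp 2 (ln x) ltac:(lra)) as Hsq.
  rewrite exp_ln in Hsq by lra. simpl in Hsq.
  assert (H2 : 2 <= eps * ln x) by (apply (Rmult_le_reg_r (/ eps)); [apply Rinv_0_lt_compat; lra|];
    replace (eps * ln x * / eps) with (ln x) by (field; lra); exact Hle).
  unfold ell. apply (Rmult_le_reg_r (x * ln x)); [nra|].
  replace (ln x / x * (x * ln x)) with (ln x * (ln x * 1)) by (field; lra). nra.
Qed.

Lemma bigO_of_le f g : ultimately (fun x => Rabs (f x) <= g x) -> bigO f g.
Proof. intros H. exists 1. eapply ultimately_mono; [|exact H]. intros x Hx. lra. Qed.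

Lemma bigO_bounded_of_le f K : ultimately (fun x => Rabs (f x) <= K) -> bigO f (fun _ => 1).
Proof. intros H. exists K. eapply ultimately_mono; [|exact H]. intros x Hx. lra. Qed.

Lemma bigO_zero g : bigO (fun _ => 0) g.
Proof. exists 0. exists 0. intros x _. rewrite Rabs_R0. lra. Qed.

Lemma bigO_refl g : ultimately (fun x => 0 <= g x) -> bigO g g.
Proof.
  intros H. apply bigO_of_le. eapply ultimately_mono; [|exact H].
  intros x Hx. rewrite Rabs_pos_eq; lra.
Qed.

Lemma bigO_ext f f' g : ultimately (fun x => f x = f' x) -> bigO f g -> bigO f' g.
Proof.
  intros Hff' [C HC]. exists C. eapply ultimately_mono; [|exact (ultimately_and _ _ Hff' HC)].
  intros x [-> H]. exact H.
Qed.

Lemma bigO_rhs_ext f g g' : (forall x, g x = g' x) -> bigO f g -> bigO f g'.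
Proof.
  intros Hg [C HC]. exists C. eapply ultimately_mono; [|exact HC].
  intros x H. rewrite <- Hg. exact H.
Qed.

Lemma bigO_trans f g h : bigO f g -> bigO g h -> bigO f h.
Proof.
  intros [C HC] [K HK]. exists (Rabs C * K).
  eapply ultimately_mono; [|exact (ultimately_and _ _ HC HK)]. intros x [H1 H2].
  pose proof (Rle_abs (C * g x)). rewrite Rabs_mult in H.
  pose proof (Rmult_le_compat_l (Rabs C) _ _ (Rabs_pos C) H2). lra.
Qed.

Lemma bigO_add f h g : bigO f g -> bigO h g -> bigO (fun x => f x + h x) g.
Proof.
  intros [C1 H1] [C2 H2]. exists (C1 + C2).
  eapply ultimately_mono; [|exact (ultimately_and _ _ H1 H2)]. intros x [A B].
  pose proof (Rabs_triang (f x) (h x)). lra.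
Qed.

Lemma bigO_mul f g h k : bigO f g -> bigO h k -> bigO (fun x => f x * h x) (fun x => g x * k x).
Proof.
  intros [C1 H1] [C2 H2]. exists (C1 * C2).
  eapply ultimately_mono; [|exact (ultimately_and _ _ H1 H2)]. intros x [A B].
  rewrite Rabs_mult. replace (C1 * C2 * (g x * k x)) with ((C1 * g x) * (C2 * k x)) by ring.
  apply Rmult_le_compat; auto using Rabs_pos.
Qed.

Lemma bigO_const c g : ultimately (fun x => 1 <= g x) -> bigO (fun _ => c) g.
Proof.
  intros H. exists (Rabs c). eapply ultimately_mono; [|exact H]. intros x Hx.
  pose proof (Rabs_pos c). nra.
Qed.

Lemma bigO_scal c f g : bigO f g -> bigO (fun x => c * f x) g.
Proof.
  intros H. apply (bigO_rhs_ext _ (fun x => 1 * g x)); [intros; ring|].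
  apply bigO_mul; [apply bigO_const; exists 0; intros; lra | exact H].
Qed.

Lemma bigO_opp f g : bigO f g -> bigO (fun x => - f x) g.
Proof.
  intros H. apply (bigO_ext (fun x => -1 * f x)); [exists 0; intros; ring | apply bigO_scal, H].
Qed.

Lemma bigO_sub f h g : bigO f g -> bigO h g -> bigO (fun x => f x - h x) g.
Proof. intros Hf Hh. apply (bigO_add f (fun x => - h x)); [exact Hf | apply bigO_opp, Hh]. Qed.

Lemma bigO_mul_bounded f h g : bigO f g -> bigO h (fun _ => 1) -> bigO (fun x => f x * h x) g.
Proof. intros Hf Hh. apply (bigO_rhs_ext _ (fun x => g x * 1)); [intros; ring | apply bigO_mul; auto]. Qed.

Lemma bigO_pow f g n : bigO f g -> bigO (fun x => f x ^ n) (fun x => g x ^ n).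
Proof.
  intros H. induction n as [|n IH]; simpl.
  - apply bigO_const. exists 0. intros; lra.
  - exact (bigO_mul _ _ _ _ H IH).
Qed.

Lemma bigO_ell_pow_le M N : (M <= N)%nat -> bigO (fun x => ell x ^ N) (fun x => ell x ^ M).
Proof.
  intros HMN. apply bigO_of_le. eapply ultimately_mono; [|exact ultimately_ell_bounds].
  intros x (_ & _ & Hi & He). rewrite Rabs_pos_eq by (apply pow_le; lra).
  apply pow_le_pow_le_1; [lra | exact HMN].
Qed.

Lemma bigO_ell_pow_bounded N : bigO (fun x => ell x ^ N) (fun _ => 1).
Proof.
  apply (bigO_rhs_ext _ (fun x => ell x ^ 0)); [reflexivity|]. apply bigO_ell_pow_le. lia.
Qed.

Lemma bigO_inv_ell : bigO (fun x => / x) ell.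
Proof.
  apply bigO_of_le. eapply ultimately_mono; [|exact ultimately_ell_bounds].
  intros x (_ & _ & Hi & _). rewrite Rabs_pos_eq; lra.
Qed.

Lemma bigO_ell_small f eps : bigO f ell -> 0 < eps -> ultimately (fun x => Rabs (f x) <= eps).
Proof.
  intros [C HC] He.
  assert (HK : 0 < eps / (Rabs C + 1)) by (apply Rdiv_lt_0_compat; [lra | pose proof (Rabs_pos C); lra]).
  eapply ultimately_mono;
    [|exact (ultimately_and _ _ HC (ultimately_and _ _ ultimately_ell_bounds (ultimately_ell_le _ HK)))].
  intros x (H1 & (_ & _ & Hi & _) & H2).
  pose proof (Rabs_pos C).
  assert (H3 : C * ell x <= Rabs C * ell x) by (apply Rmult_le_compat_r; [lra | apply Rle_abs]).
  assert (H4 : Rabs C * ell x <= Rabs C * (eps / (Rabs C + 1))) by (apply Rmult_le_compat_l; lra).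
  assert (H5 : Rabs C * (eps / (Rabs C + 1)) <= eps).
  { apply (Rmult_le_reg_r (Rabs C + 1)); [lra|]. field_simplify; [nra | lra]. }
  lra.
Qed.

Lemma bigO_exp_neg n : bigO (fun x => exp (- x)) (fun x => ell x ^ n).
Proof.
  exists (INR (fact n)). eapply ultimately_mono; [|exact ultimately_ell_bounds].
  intros x (Hx & _ & Hi & _). rewrite Rabs_pos_eq by (left; apply exp_pos).
  pose proof (pow_le_fact_exp n x ltac:(lra)) as Hpow.
  assert (Hinv : (/ x) ^ n <= ell x ^ n) by (apply pow_incr; lra).
  assert (Hone : (/ x) ^ n * x ^ n = 1) by (rewrite <- Rpow_mult_distr, Rinv_l by lra; apply pow1).
  pose proof (exp_neg_mul_exp x) as Hee. pose proof (exp_pos (- x)).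
  assert (0 <= (/ x) ^ n) by (apply pow_le; lra). pose proof (pos_INR (fact n)).
  assert (exp (- x) <= INR (fact n) * (/ x) ^ n); [|nra].
  replace (exp (- x)) with (exp (- x) * ((/ x) ^ n * x ^ n)) by (rewrite Hone; ring).
  apply Rle_trans with (exp (- x) * ((/ x) ^ n * (INR (fact n) * exp x))).
  - apply Rmult_le_compat_l; [lra|]. apply Rmult_le_compat_l; assumption.
  - replace (exp (- x) * ((/ x) ^ n * (INR (fact n) * exp x)))
      with (INR (fact n) * (/ x) ^ n * (exp (- x) * exp x)) by ring.
    rewrite Hee. lra.
Qed.

Lemma ultimately_exp_neg_le eps : 0 < eps -> ultimately (fun x => exp (- x) <= eps).
Proof.
  intros He. exists (- ln eps). intros x Hx. rewrite <- (exp_ln eps) by exact He.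
  apply exp_le. lra.
Qed.

(** * Expansions in powers of ln x / x and 1 / x *)

(* A monomial (c, a, b) stands for c (ln x / x)^a x^-b = c ln^a x / x^(a+b). *)
Definition monomial : Type := (R * nat * nat)%type.

Definition mon_eval (m : monomial) (x : R) : R :=
  let '(c, a, b) := m in c * ell x ^ a * (/ x) ^ b.

Fixpoint lp_eval (l : list monomial) (x : R) : R :=
  match l with nil => 0 | m :: l' => mon_eval m x + lp_eval l' x end.

Definition mon_mul (m1 m2 : monomial) : monomial :=
  let '(c1, a1, b1) := m1 in let '(c2, a2, b2) := m2 in (c1 * c2, (a1 + a2)%nat, (b1 + b2)%nat).

Definition lp_mul (l1 l2 : list monomial) : list monomial :=
  flat_map (fun m1 => map (mon_mul m1) l2) l1.

Lemma lp_eval_app l1 l2 x : lp_eval (l1 ++ l2) x = lp_eval l1 x + lp_eval l2 x.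
Proof. induction l1 as [|m l1 IH]; simpl; [ring | rewrite IH; ring]. Qed.

Lemma mon_eval_mul m1 m2 x : mon_eval (mon_mul m1 m2) x = mon_eval m1 x * mon_eval m2 x.
Proof. destruct m1 as [[c1 a1] b1], m2 as [[c2 a2] b2]. simpl. rewrite !pow_add. ring. Qed.

Lemma lp_eval_mul l1 l2 x : lp_eval (lp_mul l1 l2) x = lp_eval l1 x * lp_eval l2 x.
Proof.
  induction l1 as [|m l1 IH]; simpl; [ring|]. unfold lp_mul in *. simpl.
  rewrite lp_eval_app, IH.
  assert (Hmap : forall l, lp_eval (map (mon_mul m) l) x = mon_eval m x * lp_eval l x).
  { induction l as [|m' l IHl]; simpl; [ring | rewrite IHl, mon_eval_mul; ring]. }
  rewrite Hmap. ring.
Qed.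

Lemma lp_eval_bounded l : bigO (lp_eval l) (fun _ => 1).
Proof.
  induction l as [|[[c a] b] l IH]; [apply bigO_zero|].
  apply (bigO_add (mon_eval (c, a, b))); [|exact IH].
  exists (Rabs c). eapply ultimately_mono; [|exact ultimately_ell_bounds].
  intros x (_ & _ & Hi & He). simpl.
  rewrite !Rabs_mult, <- !RPow_abs, (Rabs_pos_eq (ell x)), (Rabs_pos_eq (/ x)) by lra.
  pose proof (pow_le_1 (ell x) a ltac:(lra)). pose proof (pow_le_1 (/ x) b ltac:(lra)).
  pose proof (pow_le (ell x) a ltac:(lra)). pose proof (pow_le (/ x) b ltac:(lra)).
  pose proof (Rabs_pos c).
  assert (ell x ^ a * (/ x) ^ b <= 1) by nra. nra.
Qed.

Definition has_expansion (N : nat) (f : R -> R) : Prop :=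
  exists l, bigO (fun x => f x - lp_eval l x) (fun x => ell x ^ S N).

Lemma expansion_close N f g :
  has_expansion N f -> bigO (fun x => g x - f x) (fun x => ell x ^ S N) -> has_expansion N g.
Proof.
  intros [l Hl] Hgf. exists l.
  eapply bigO_ext; [|exact (bigO_add _ _ _ Hgf Hl)]. exists 0. intros. ring.
Qed.

Lemma expansion_eq N f g : (forall x, f x = g x) -> has_expansion N f -> has_expansion N g.
Proof.
  intros Hfg [l H]. exists l. eapply bigO_ext; [|exact H]. exists 0. intros x _. rewrite Hfg. reflexivity.
Qed.

Lemma expansion_mon N c a b : has_expansion N (fun x => c * ell x ^ a * (/ x) ^ b).
Proof.
  exists ((c, a, b) :: nil). eapply bigO_ext; [|apply bigO_zero]. exists 0. intros. simpl. ring.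
Qed.

Lemma expansion_const N c : has_expansion N (fun _ => c).
Proof. apply (expansion_eq N (fun x => c * ell x ^ 0 * (/ x) ^ 0)); [intros; simpl; ring | apply expansion_mon]. Qed.

Lemma expansion_ell N : has_expansion N ell.
Proof. apply (expansion_eq N (fun x => 1 * ell x ^ 1 * (/ x) ^ 0)); [intros; simpl; ring | apply expansion_mon]. Qed.

Lemma expansion_inv N : has_expansion N (fun x => / x).
Proof. apply (expansion_eq N (fun x => 1 * ell x ^ 0 * (/ x) ^ 1)); [intros; simpl; ring | apply expansion_mon]. Qed.

Lemma expansion_add N f g :
  has_expansion N f -> has_expansion N g -> has_expansion N (fun x => f x + g x).
Proof.
  intros [l1 H1] [l2 H2]. exists (l1 ++ l2).
  eapply bigO_ext; [|exact (bigO_add _ _ _ H1 H2)]. exists 0. intros. rewrite lp_eval_app. ring.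
Qed.

Lemma expansion_bounded N f : has_expansion N f -> bigO f (fun _ => 1).
Proof.
  intros [l H].
  eapply bigO_ext; [|exact (bigO_add _ _ _ (bigO_trans _ _ _ H (bigO_ell_pow_bounded _)) (lp_eval_bounded l))].
  exists 0. intros; ring.
Qed.

Lemma expansion_mul N f g :
  has_expansion N f -> has_expansion N g -> has_expansion N (fun x => f x * g x).
Proof.
  intros Hf Hg. pose proof (expansion_bounded N g Hg) as Bg.
  destruct Hf as [l1 H1], Hg as [l2 H2]. exists (lp_mul l1 l2).
  eapply bigO_ext;
    [|exact (bigO_add _ _ _ (bigO_mul_bounded _ _ _ H1 Bg)
               (bigO_mul_bounded _ _ _ H2 (lp_eval_bounded l1)))].
  exists 0. intros. rewrite lp_eval_mul. ring.
Qed.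

Lemma expansion_scal N c f : has_expansion N f -> has_expansion N (fun x => c * f x).
Proof. intros Hf. exact (expansion_mul N _ _ (expansion_const N c) Hf). Qed.

Lemma expansion_sub N f g :
  has_expansion N f -> has_expansion N g -> has_expansion N (fun x => f x - g x).
Proof.
  intros Hf Hg. apply (expansion_eq N (fun x => f x + (-1) * g x)); [intros; ring|].
  apply expansion_add; [exact Hf | apply expansion_scal, Hg].
Qed.

Lemma expansion_pow N f n : has_expansion N f -> has_expansion N (fun x => f x ^ n).
Proof.
  intros Hf. induction n as [|n IH]; [exact (expansion_const N 1) | exact (expansion_mul N _ _ Hf IH)].
Qed.

Lemma expansion_inv_mul N f : has_expansion N f -> has_expansion (S N) (fun x => / x * f x).
Proof.
  intros [l H]. exists (lp_mul ((1, 0%nat, 1%nat) :: nil) l).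
  eapply bigO_ext; [|exact (bigO_mul _ _ _ _ bigO_inv_ell H)].
  exists 0. intros. rewrite lp_eval_mul. simpl. ring.
Qed.

Fixpoint geom_alt (M : nat) (r : R) : R :=
  match M with O => 0 | S M' => geom_alt M' r + (- r) ^ M' end.

Fixpoint log1p_taylor (M : nat) (r : R) : R :=
  match M with O => 0 | S M' => log1p_taylor M' r + (-1) ^ M' * r ^ S M' / INR (S M') end.

Lemma inv1p_sub_geom_alt M r : -1 < r -> / (1 + r) - geom_alt M r = (- r) ^ M / (1 + r).
Proof.
  intros Hr. assert (Hmul : (1 + r) * geom_alt M r = 1 - (- r) ^ M).
  { induction M as [|M IH]; simpl; [ring|]. rewrite Rmult_plus_distr_l, IH. ring. }
  apply (Rmult_eq_reg_l (1 + r)); [|lra]. rewrite Rmult_minus_distr_l, Hmul. field. lra.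
Qed.

Lemma log1p_taylor_0 M : log1p_taylor M 0 = 0.
Proof. induction M as [|M IH]; simpl; [reflexivity|]. rewrite IH. unfold Rdiv. ring. Qed.

Lemma is_derive_log1p_taylor M r : is_derive (log1p_taylor M) r (geom_alt M r).
Proof.
  induction M as [|M IH]; [apply (is_derive_const 0)|].
  apply (is_derive_plus _ _ _ _ _ IH).
  auto_derive; [auto|].
  change (match M with 0%nat => 1 | S _ => INR M + 1 end) with (INR (S M)).
  replace (- r) with (-1 * r) by ring. rewrite Rpow_mult_distr.
  field. apply not_0_INR. lia.
Qed.

Lemma inv1p_geom_alt_bound M v :
  Rabs v <= 1/2 -> Rabs (/ (1 + v) - geom_alt M v) <= 2 * Rabs v ^ M.
Proof.
  intros Hv. apply Rabs_le_between in Hv as Hv'.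
  rewrite inv1p_sub_geom_alt by lra. unfold Rdiv.
  rewrite Rabs_mult, <- RPow_abs, Rabs_Ropp, (Rabs_pos_eq (/ (1 + v))) by (left; apply Rinv_0_lt_compat; lra).
  assert (/ (1 + v) <= 2) by (apply (Rmult_le_reg_r (1 + v)); [lra|]; rewrite Rinv_l by lra; lra).
  pose proof (pow_le (Rabs v) M (Rabs_pos v)). nra.
Qed.

Lemma ln1p_taylor_bound M v :
  Rabs v <= 1/2 -> Rabs (ln (1 + v) - log1p_taylor M v) <= 2 * Rabs v ^ S M.
Proof.
  intros Hv.
  set (phi := fun r => ln (1 + r) - log1p_taylor M r).
  assert (Hseg : forall c, Rmin 0 v <= c <= Rmax 0 v -> Rabs c <= Rabs v).
  { intros c Hc. unfold Rmin, Rmax in Hc. apply Rabs_le.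
    destruct (Rle_dec 0 v); [rewrite Rabs_pos_eq | rewrite Rabs_left]; lra. }
  assert (Hd : forall c, Rmin 0 v <= c <= Rmax 0 v ->
    is_derive phi c (/ (1 + c) - geom_alt M c)).
  { intros c Hc. pose proof (Hseg c Hc) as Hcv.
    assert (Hc1 : Rabs c <= 1/2) by lra. apply Rabs_le_between in Hc1.
    apply (is_derive_minus (fun r => ln (1 + r))); [|apply is_derive_log1p_taylor].
    auto_derive; [lra | field; lra]. }
  destruct (MVT_gen phi 0 v (fun c => / (1 + c) - geom_alt M c)) as [c [Hc Hmvt]].
  - intros c Hc. apply Hd. lra.
  - intros c Hc. apply continuity_pt_filterlim.
    apply (ex_derive_continuous (K := R_AbsRing) (V := R_NormedModule)). eexists. apply Hd, Hc.
  - assert (Hphi0 : phi 0 = 0).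
    { unfold phi. rewrite Rplus_0_r, ln_1, log1p_taylor_0. ring. }
    change (ln (1 + v) - log1p_taylor M v) with (phi v).
    replace (phi v) with ((/ (1 + c) - geom_alt M c) * v)
      by (rewrite Rminus_0_r in Hmvt; rewrite <- Hmvt, Hphi0; ring).
    pose proof (Hseg c Hc) as Hcv.
    rewrite Rabs_mult. simpl. rewrite (Rmult_comm (Rabs v)), <- Rmult_assoc.
    apply Rmult_le_compat_r; [apply Rabs_pos|].
    eapply Rle_trans; [apply inv1p_geom_alt_bound; lra|].
    apply Rmult_le_compat_l; [lra|]. apply pow_incr. split; [apply Rabs_pos | exact Hcv].
Qed.

Lemma bigO_abs f g : bigO f g -> bigO (fun x => Rabs (f x)) g.
Proof.
  intros [C H]. exists C. eapply ultimately_mono; [|exact H]. intros x. rewrite Rabs_Rabsolu. auto.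
Qed.

Lemma expansion_comp_small N g p v :
  (forall r, Rabs r <= 1/2 -> Rabs (g r - p r) <= 2 * Rabs r ^ S N) ->
  has_expansion N (fun x => p (v x)) -> bigO v ell -> has_expansion N (fun x => g (v x)).
Proof.
  intros Hgp Hp Hv. apply (expansion_close N _ _ Hp).
  apply (bigO_trans _ (fun x => Rabs (v x) ^ S N)); [|exact (bigO_pow _ _ _ (bigO_abs _ _ Hv))].
  exists 2. eapply ultimately_mono; [|exact (bigO_ell_small v (1/2) Hv ltac:(lra))].
  intros x Hx. exact (Hgp (v x) Hx).
Qed.

Lemma expansion_geom_alt N M v : has_expansion N v -> has_expansion N (fun x => geom_alt M (v x)).
Proof.
  intros Hv. induction M as [|M IH]; [exact (expansion_const N 0)|].
  apply (expansion_add N _ _ IH). apply expansion_pow.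
  apply (expansion_eq N (fun x => -1 * v x)); [intros; ring | apply expansion_scal, Hv].
Qed.

Lemma expansion_log1p_taylor N M v : has_expansion N v -> has_expansion N (fun x => log1p_taylor M (v x)).
Proof.
  intros Hv. induction M as [|M IH]; [exact (expansion_const N 0)|].
  apply (expansion_add N _ _ IH).
  apply (expansion_eq N (fun x => ((-1) ^ M / INR (S M)) * v x ^ S M)); [intros; unfold Rdiv; ring|].
  apply expansion_scal, expansion_pow, Hv.
Qed.

Lemma expansion_ln1p N v :
  has_expansion N v -> bigO v ell -> has_expansion N (fun x => ln (1 + v x)).
Proof.
  intros Hv Hsmall. apply (expansion_comp_small N (fun r => ln (1 + r)) (log1p_taylor N)); auto.
  - exact (ln1p_taylor_bound N).
  - apply expansion_log1p_taylor, Hv.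
Qed.

Lemma expansion_inv1p N v :
  has_expansion N v -> bigO v ell -> has_expansion N (fun x => / (1 + v x)).
Proof.
  intros Hv Hsmall. apply (expansion_comp_small N (fun r => / (1 + r)) (geom_alt (S N))); auto.
  - intros r Hr. exact (inv1p_geom_alt_bound (S N) r Hr).
  - apply expansion_geom_alt, Hv.
Qed.

Lemma expansion_inv_near_1 N f :
  has_expansion N f -> bigO (fun x => f x - 1) ell -> has_expansion N (fun x => / f x).
Proof.
  intros Hf Hf1. apply (expansion_eq N (fun x => / (1 + (f x - 1)))); [intros; f_equal; ring|].
  apply expansion_inv1p; [apply expansion_sub; [exact Hf | apply expansion_const] | exact Hf1].
Qed.

(** * The logarithmic integral *)

Definition inv_ln_pow (m : nat) (t : R) : R := / ln t ^ m.

Lemma inv_ln_pow_pos m z : 1 < z -> 0 < inv_ln_pow m z.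
Proof. intros H. apply Rinv_0_lt_compat, pow_lt, ln_pos_gt_1, H. Qed.

Lemma inv_ln_pow_S m y : inv_ln_pow (S m) y = inv_ln_pow 1 y ^ S m.
Proof. unfold inv_ln_pow. rewrite pow_1, pow_inv. reflexivity. Qed.

Lemma inv_ln_pow_le m a b : 1 < a -> a <= b -> inv_ln_pow m b <= inv_ln_pow m a.
Proof.
  intros Ha Hab. pose proof (ln_pos_gt_1 a Ha). apply Rinv_le_contravar; [apply pow_lt; lra|].
  apply pow_incr. split; [lra | apply ln_le; lra].
Qed.

Lemma is_derive_inv_ln_pow m z :
  1 < z -> is_derive (inv_ln_pow m) z (- INR m / z * inv_ln_pow (S m) z).
Proof.
  intros H. pose proof (ln_pos_gt_1 z H). unfold inv_ln_pow. auto_derive.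
  - repeat split; try lra. apply pow_nonzero. lra.
  - destruct m; simpl; field; repeat split; try lra; apply pow_nonzero; lra.
Qed.

Lemma continuous_inv_ln_pow m z : 1 < z -> continuous (inv_ln_pow m) z.
Proof.
  intros H. apply (ex_derive_continuous (K := R_AbsRing) (V := R_NormedModule)).
  eexists. exact (is_derive_inv_ln_pow m z H).
Qed.

Lemma ex_RInt_inv_ln_pow m a b : 1 < a -> 1 < b -> ex_RInt (inv_ln_pow m) a b.
Proof.
  intros Ha Hb. apply (ex_RInt_continuous (V := R_CompleteNormedModule)). intros z Hz.
  apply continuous_inv_ln_pow. unfold Rmin, Rmax in Hz. destruct (Rle_dec a b); lra.
Qed.

Lemma RInt_inv_ln_pow_bounds m a b : 1 < a -> a <= b ->
  (b - a) * inv_ln_pow m b <= RInt (inv_ln_pow m) a b <= (b - a) * inv_ln_pow m a.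
Proof.
  intros Ha Hab. rewrite <- !(RInt_const (V := R_CompleteNormedModule)). split.
  - apply RInt_le; auto using ex_RInt_const, ex_RInt_inv_ln_pow with real.
    + apply ex_RInt_inv_ln_pow; lra.
    + intros x Hx. apply inv_ln_pow_le; lra.
  - apply RInt_le; auto using ex_RInt_const.
    + apply ex_RInt_inv_ln_pow; lra.
    + intros x Hx. apply inv_ln_pow_le; lra.
Qed.

Lemma RInt_inv_ln_pow_parts m a b : 1 < a -> 1 < b ->
  RInt (inv_ln_pow m) a b
  = b * inv_ln_pow m b - a * inv_ln_pow m a + INR m * RInt (inv_ln_pow (S m)) a b :> R.
Proof.
  intros Ha Hb.
  assert (Hin : forall x, Rmin a b <= x <= Rmax a b -> 1 < x).
  { intros x Hx. unfold Rmin, Rmax in Hx. destruct (Rle_dec a b); lra. }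
  assert (Hderiv : forall x, 1 < x -> is_derive (fun t => t * inv_ln_pow m t) x
                                  (inv_ln_pow m x - INR m * inv_ln_pow (S m) x)).
  { intros x Hx. pose proof (ln_pos_gt_1 x Hx). unfold inv_ln_pow. auto_derive.
    - repeat split; try lra. apply pow_nonzero. lra.
    - destruct m; simpl; field; repeat split; try lra; apply pow_nonzero; lra. }
  assert (HI : is_RInt (fun t => inv_ln_pow m t - INR m * inv_ln_pow (S m) t) a b
                       (b * inv_ln_pow m b - a * inv_ln_pow m a)).
  { apply (is_RInt_derive (fun t => t * inv_ln_pow m t)); intros x Hx.
    - apply Hderiv, Hin, Hx.
    - apply (ex_derive_continuous (K := R_AbsRing) (V := R_NormedModule)).
      eexists. apply (is_derive_minus (inv_ln_pow m) (fun t => INR m * inv_ln_pow (S m) t)).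
      + apply is_derive_inv_ln_pow, Hin, Hx.
      + apply is_derive_scal, is_derive_inv_ln_pow, Hin, Hx. }
  apply (is_RInt_unique (V := R_CompleteNormedModule)) in HI.
  rewrite (RInt_minus (V := R_CompleteNormedModule)) in HI;
    [| apply ex_RInt_inv_ln_pow; auto
     | apply (ex_RInt_scal (V := R_NormedModule)), ex_RInt_inv_ln_pow; auto].
  rewrite (RInt_scal (V := R_CompleteNormedModule)) in HI by (apply ex_RInt_inv_ln_pow; auto).
  change minus with Rminus in HI. change scal with Rmult in HI. lra.
Qed.

Lemma li_sub y1 y2 l1 l2 : 1 < y1 -> 1 < y2 -> is_li y1 l1 -> is_li y2 l2 ->
  l2 = l1 + RInt (inv_ln_pow 1) y1 y2.
Proof.
  intros H1 H2 L1 L2. unfold is_li in *.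
  set (c := RInt (inv_ln_pow 1) y1 y2).
  set (pv := fun y eps => RInt (fun t => / ln t) 0 (1 - eps) + RInt (fun t => / ln t) (1 + eps) y).
  assert (L3 : filterlim (fun eps => plus (pv y1 eps) c) (at_right 0) (locally (plus l1 c))).
  { apply (filterlim_comp_2 (pv y1) (fun _ => c) plus L1 (filterlim_const c)).
    apply (filterlim_plus (K := R_AbsRing) (V := R_NormedModule)). }
  assert (L4 : filterlim (pv y2) (at_right 0) (locally (plus l1 c))).
  { apply (filterlim_ext_loc (fun eps => plus (pv y1 eps) c)); [|exact L3].
    assert (Hd : 0 < Rmin y1 y2 - 1) by (apply Rmin_case; lra).
    exists (mkposreal _ Hd). intros eps Hb Hpos. simpl in Hb.
    unfold ball in Hb; simpl in Hb; unfold AbsRing_ball, abs, minus, plus, opp in Hb; simpl in Hb.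
    rewrite Ropp_0, Rplus_0_r in Hb. apply Rabs_lt_between in Hb.
    pose proof (Rmin_l y1 y2). pose proof (Rmin_r y1 y2).
    assert (Hinv : forall a b, RInt (fun t => / ln t) a b = RInt (inv_ln_pow 1) a b)
      by (intros; apply RInt_ext; intros; unfold inv_ln_pow; rewrite pow_1; reflexivity).
    unfold pv, c. rewrite !Hinv.
    rewrite <- (RInt_Chasles (V := R_CompleteNormedModule) (inv_ln_pow 1) (1 + eps) y1 y2)
      by (apply ex_RInt_inv_ln_pow; lra).
    apply Rplus_assoc. }
  exact (@filterlim_locally_unique R R_AbsRing R_NormedModule (at_right 0)
           (Proper_StrongProper _ (at_right_proper_filter 0)) (pv y2) _ _ L2 L4).
Qed.

Lemma pow_le_exp_half m : exists Z, 0 < Z /\ forall z, Z <= z -> z ^ m <= exp (z / 2).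
Proof.
  set (K := 2 ^ S m * INR (fact (S m))).
  assert (HK : 0 < K) by (apply Rmult_lt_0_compat; [apply pow_lt; lra | apply lt_0_INR, lt_O_fact]).
  exists (Rmax 1 K). split; [pose proof (Rmax_l 1 K); lra|].
  intros z Hz. pose proof (Rmax_l 1 K). pose proof (Rmax_r 1 K).
  pose proof (pow_le_fact_exp (S m) (z / 2) ltac:(lra)) as Hf.
  assert (Hzz : z * z ^ m <= K * exp (z / 2)).
  { change (z * z ^ m) with (z ^ S m). replace z with (2 * (z / 2)) at 1 by field.
    rewrite Rpow_mult_distr. unfold K. rewrite Rmult_assoc.
    apply Rmult_le_compat_l; [apply pow_le; lra | exact Hf]. }
  pose proof (exp_pos (z / 2)). pose proof (pow_le z m ltac:(lra)).
  assert (K * exp (z / 2) <= z * exp (z / 2)) by (apply Rmult_le_compat_r; lra).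
  nra.
Qed.

Lemma RInt_inv_ln_pow_growth m y0 : 1 < y0 -> exists C Y, 1 < Y /\ forall y, Y <= y ->
  0 <= RInt (inv_ln_pow m) y0 y <= C * (y * inv_ln_pow m y).
Proof.
  intros Hy0. destruct (pow_le_exp_half m) as [Z [HZ HZ']].
  exists (inv_ln_pow m y0 + 2 ^ m), (Rmax (y0 * y0) (exp Z)).
  split; [eapply Rlt_le_trans; [|apply Rmax_l]; nra|].
  intros y Hy. pose proof (Rmax_l (y0 * y0) (exp Z)). pose proof (Rmax_r (y0 * y0) (exp Z)).
  assert (Hy1 : 1 < y) by nra.
  set (z := ln y).
  assert (Hz : Z <= z) by (unfold z; rewrite <- (ln_exp Z); apply ln_le; [apply exp_pos | lra]).
  (* split the integral at p = sqrt y *)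
  set (p := exp (z / 2)).
  assert (Hpp : p * p = y).
  { unfold p. rewrite <- exp_plus. replace (z / 2 + z / 2) with z by field. apply exp_ln. lra. }
  pose proof (exp_pos (z / 2)) as Hp0. fold p in Hp0.
  assert (Hy0p : y0 <= p) by nra.
  assert (Hpy : p <= y) by nra.
  assert (Hzpos : 0 < z) by (apply ln_pos_gt_1; exact Hy1).
  assert (Hzm : 0 < z ^ m) by (apply pow_lt; lra).
  assert (Hgrow : z ^ m <= p) by (apply HZ'; exact Hz).
  assert (Ey : inv_ln_pow m y = / z ^ m) by reflexivity.
  assert (Ep : inv_ln_pow m p = 2 ^ m * / z ^ m).
  { unfold inv_ln_pow, p. rewrite ln_exp. unfold Rdiv. rewrite Rpow_mult_distr, pow_inv.
    field. split; apply pow_nonzero; lra. }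
  rewrite <- (RInt_Chasles (V := R_CompleteNormedModule) (inv_ln_pow m) y0 p y)
    by (apply ex_RInt_inv_ln_pow; lra).
  change plus with Rplus.
  destruct (RInt_inv_ln_pow_bounds m y0 p Hy0 Hy0p) as [B1 B2].
  destruct (RInt_inv_ln_pow_bounds m p y ltac:(lra) Hpy) as [B3 B4].
  pose proof (inv_ln_pow_pos m y0 Hy0). pose proof (inv_ln_pow_pos m y Hy1).
  pose proof (inv_ln_pow_pos m p ltac:(lra)).
  split; [nra|].
  assert (G1 : p <= y * inv_ln_pow m y).
  { rewrite Ey, <- Hpp. apply (Rmult_le_reg_r (z ^ m)); [exact Hzm|]. field_simplify; [nra | lra]. }
  assert (G2 : (y - p) * inv_ln_pow m p <= 2 ^ m * (y * inv_ln_pow m y)).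
  { rewrite Ep, Ey. pose proof (Rinv_0_lt_compat _ Hzm). pose proof (pow_lt 2 m ltac:(lra)). nra. }
  nra.
Qed.

Fixpoint fact_series (K : nat) (w : R) : R :=
  match K with O => 0 | S K' => fact_series K' w + INR (fact K') * w ^ K' end.

Lemma RInt_inv_ln_by_parts K y0 y : 1 < y0 -> 1 < y ->
  RInt (inv_ln_pow 1) y0 y
  = y * inv_ln_pow 1 y * fact_series K (inv_ln_pow 1 y)
    - y0 * inv_ln_pow 1 y0 * fact_series K (inv_ln_pow 1 y0)
    + INR (fact K) * RInt (inv_ln_pow (S K)) y0 y :> R.
Proof.
  intros Hy0 Hy. induction K as [|K IH]; [simpl fact_series; change (INR (fact 0)) with 1; lra|].
  rewrite IH, (RInt_inv_ln_pow_parts (S K) y0 y Hy0 Hy), (inv_ln_pow_S K y), (inv_ln_pow_S K y0).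
  replace (fact (S K)) with (S K * fact K)%nat by reflexivity.
  rewrite mult_INR. simpl fact_series. simpl pow.
  ring.
Qed.

Lemma li_integral_asymptotics K y0 : 1 < y0 -> exists A B Y, 1 < Y /\ forall y, Y <= y ->
  Rabs (RInt (inv_ln_pow 1) y0 y - y * inv_ln_pow 1 y * fact_series K (inv_ln_pow 1 y))
  <= A + B * (y * inv_ln_pow (S K) y).
Proof.
  intros Hy0. destruct (RInt_inv_ln_pow_growth (S K) y0 Hy0) as [C [Y [HY HC]]].
  exists (Rabs (y0 * inv_ln_pow 1 y0 * fact_series K (inv_ln_pow 1 y0))), (INR (fact K) * C), Y.
  split; [exact HY|]. intros y Hy.
  rewrite (RInt_inv_ln_by_parts K y0 y Hy0) by lra.
  destruct (HC y Hy) as [J1 J2]. pose proof (pos_INR (fact K)).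
  match goal with |- Rabs ?e <= _ => replace e with
    (- (y0 * inv_ln_pow 1 y0 * fact_series K (inv_ln_pow 1 y0))
     + INR (fact K) * RInt (inv_ln_pow (S K)) y0 y) by ring end.
  eapply Rle_trans; [apply Rabs_triang|]. rewrite Rabs_Ropp.
  rewrite (Rabs_pos_eq (INR (fact K) * _)) by nra.
  assert (INR (fact K) * RInt (inv_ln_pow (S K)) y0 y <= INR (fact K) * (C * (y * inv_ln_pow (S K) y)))
    by (apply Rmult_le_compat_l; auto).
  lra.
Qed.

Lemma fact_series_S_0 K : fact_series (S K) 0 = 1.
Proof.
  induction K as [|K IH]; [simpl; ring|].
  change (fact_series (S (S K)) 0) with (fact_series (S K) 0 + INR (fact (S K)) * 0 ^ S K).
  rewrite IH. simpl. ring.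
Qed.

Lemma fact_series_lipschitz K w :
  Rabs w <= 1 -> Rabs (fact_series K w - fact_series K 0) <= fact_series K 1 * Rabs w.
Proof.
  intros Hw. induction K as [|K IH]; simpl fact_series.
  - rewrite Rminus_0_r, Rabs_R0. lra.
  - replace (fact_series K w + INR (fact K) * w ^ K - (fact_series K 0 + INR (fact K) * 0 ^ K))
      with ((fact_series K w - fact_series K 0) + INR (fact K) * (w ^ K - 0 ^ K)) by ring.
    eapply Rle_trans; [apply Rabs_triang|]. rewrite pow1.
    assert (Rabs (w ^ K - 0 ^ K) <= Rabs w).
    { destruct K as [|K]; [simpl; rewrite Rminus_diag, Rabs_R0; apply Rabs_pos|].
      rewrite pow_i, Rminus_0_r, <- RPow_abs by lia. simpl.
      pose proof (pow_le_1 (Rabs w) K (conj (Rabs_pos w) Hw)). pose proof (Rabs_pos w). nra. }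
    rewrite Rabs_mult, (Rabs_pos_eq (INR (fact K))) by apply pos_INR.
    pose proof (pos_INR (fact K)). nra.
Qed.

Lemma expansion_fact_series N K w :
  has_expansion N w -> has_expansion N (fun x => fact_series K (w x)).
Proof.
  intros Hw. induction K as [|K IH]; [exact (expansion_const N 0)|].
  exact (expansion_add N _ _ IH (expansion_scal N _ _ (expansion_pow N _ K Hw))).
Qed.

Lemma bigO_fact_series_sub1 K w : bigO w ell -> bigO (fun x => fact_series (S K) (w x) - 1) ell.
Proof.
  intros Hw. apply (bigO_trans _ (fun x => fact_series (S K) 1 * Rabs (w x))).
  - apply bigO_of_le. eapply ultimately_mono; [|exact (bigO_ell_small w 1 Hw ltac:(lra))].
    intros x Hx. rewrite <- (fact_series_S_0 K) at 1. apply fact_series_lipschitz, Hx.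
  - apply bigO_scal, bigO_abs, Hw.
Qed.

(** * Asymptotics of ali *)

Section Ali.

Variable ali : R -> R.
Hypothesis Hali : is_ali ali.

Definition ali_ratio (x : R) : R := ali (exp x) / (x * exp x).

Definition ali_ln_ratio (x : R) : R := 1 + ell x + / x * ln (ali_ratio x).

Lemma ali_exp_integral x : RInt (inv_ln_pow 1) (ali 1) (ali (exp x)) = exp x - 1.
Proof.
  destruct (Hali 1) as [A1 A2]. destruct (Hali (exp x)) as [B1 B2].
  pose proof (li_sub _ _ _ _ A1 B1 A2 B2). lra.
Qed.

Lemma ali_exp_lower x : 0 < x -> ali 1 < ali (exp x) /\ ln (ali 1) * exp x <= ali (exp x).
Proof.
  intros Hx. pose proof (ali_exp_integral x) as HI.
  destruct (Hali 1) as [A1 _]. destruct (Hali (exp x)) as [B1 _].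
  set (y0 := ali 1) in *. set (y := ali (exp x)) in *.
  pose proof (exp_ineq1_le x). pose proof (inv_ln_pow_pos 1 y0 A1).
  assert (Hlt : y0 < y).
  { destruct (Rlt_le_dec y0 y) as [Hc|Hc]; auto.
    destruct (RInt_inv_ln_pow_bounds 1 y y0 B1 Hc) as [C1 C2].
    rewrite <- (opp_RInt_swap (V := R_CompleteNormedModule)) in HI by (apply ex_RInt_inv_ln_pow; auto).
    change opp with Ropp in HI. nra. }
  split; [exact Hlt|].
  destruct (RInt_inv_ln_pow_bounds 1 y0 y A1 (Rlt_le _ _ Hlt)) as [_ C2].
  pose proof (ln_pos_gt_1 y0 A1). pose proof (ln_le_sub1 y0 ltac:(lra)).
  replace (inv_ln_pow 1 y0) with (/ ln y0) in C2 by (unfold inv_ln_pow; rewrite pow_1; reflexivity).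
  assert (Hmul : ln y0 * (exp x - 1) <= y - y0).
  { apply (Rmult_le_reg_r (/ ln y0)); [apply Rinv_0_lt_compat; lra|].
    replace (ln y0 * (exp x - 1) * / ln y0) with (exp x - 1) by (field; lra). lra. }
  nra.
Qed.

Lemma ali_ratio_pos x : 0 < x -> 0 < ali_ratio x.
Proof.
  intros Hx. destruct (Hali (exp x)) as [B1 _]. pose proof (exp_pos x).
  unfold ali_ratio. apply Rdiv_lt_0_compat; nra.
Qed.

Lemma ln_ali_exp x : 0 < x -> ln (ali (exp x)) = x * ali_ln_ratio x.
Proof.
  intros Hx. pose proof (ali_ratio_pos x Hx). pose proof (exp_pos x).
  assert (E : ali (exp x) = x * exp x * ali_ratio x) by (unfold ali_ratio; field; lra).
  rewrite E, !ln_mult, ln_exp by nra. unfold ali_ln_ratio, ell. field. lra.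
Qed.

Lemma abs_sub_rescale E e a b c : 0 < e -> e * E = 1 ->
  Rabs (E - 1 - E * a) <= b + c * E -> Rabs (1 - a) <= (b + 1) * e + c.
Proof.
  intros He HeE H.
  replace (1 - a) with (e * (E - 1 - E * a) + e)
    by (transitivity (e * E - e * E * a); [ring | rewrite HeE; ring]).
  eapply Rle_trans; [apply Rabs_triang|].
  rewrite Rabs_mult, !(Rabs_pos_eq e) by lra.
  assert (Hs : e * Rabs (E - 1 - E * a) <= e * (b + c * E)) by (apply Rmult_le_compat_l; lra).
  replace (e * (b + c * E)) with (b * e + c * (e * E)) in Hs by ring. rewrite HeE in Hs. lra.
Qed.

(* Combine li (ali (e^x)) = e^x with the asymptotics of li at y = ali (e^x), where
   ln y = x * ali_ln_ratio x, and divide by e^x. *)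
Lemma ali_ratio_key_bound K : exists A B, ultimately (fun x =>
  0 < ali_ln_ratio x /\
  Rabs (1 - ali_ratio x / ali_ln_ratio x * fact_series K (/ x / ali_ln_ratio x))
  <= A * exp (- x) + B * (ali_ratio x / ali_ln_ratio x) * (/ x / ali_ln_ratio x) ^ K).
Proof.
  destruct (Hali 1) as [Hy0 _]. set (y0 := ali 1) in *.
  destruct (li_integral_asymptotics K y0 Hy0) as [A [B [Y [HY HB]]]].
  pose proof (ln_pos_gt_1 y0 Hy0) as Hly0.
  exists (A + 1), B, (Rmax 1 (ln (Y / ln y0))). intros x Hx.
  pose proof (Rmax_l 1 (ln (Y / ln y0))). pose proof (Rmax_r 1 (ln (Y / ln y0))).
  destruct (ali_exp_lower x ltac:(lra)) as [_ Hlow]. fold y0 in Hlow.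
  pose proof (ali_exp_integral x) as HI. fold y0 in HI.
  pose proof (exp_pos x). pose proof (exp_pos (- x)).
  set (y := ali (exp x)) in *.
  assert (HYy : Y <= y).
  { assert (Hexp : Y / ln y0 <= exp x).
    { rewrite <- (exp_ln (Y / ln y0)) by (apply Rdiv_lt_0_compat; lra). apply exp_le. lra. }
    apply Rle_trans with (ln y0 * exp x); [|exact Hlow].
    apply (Rmult_le_reg_r (/ ln y0)); [apply Rinv_0_lt_compat; lra|].
    replace (ln y0 * exp x * / ln y0) with (exp x) by (field; lra). exact Hexp. }
  pose proof (ln_ali_exp x ltac:(lra)) as Hlny. fold y in Hlny.
  pose proof (ln_pos_gt_1 y ltac:(lra)) as Hlnpos.
  pose proof (ali_ratio_pos x ltac:(lra)) as Hu.
  set (u := ali_ratio x) in *. set (D := ali_ln_ratio x) in *.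
  assert (HD : 0 < D) by (rewrite Hlny in Hlnpos; apply (Rmult_lt_reg_l x); lra).
  split; [exact HD|].
  set (w := / x / D).
  assert (Hw : inv_ln_pow 1 y = w) by (unfold inv_ln_pow, w; rewrite pow_1, Hlny; field; lra).
  assert (Hyw : y * w = exp x * (u / D)) by (unfold u, ali_ratio, y, w; field; lra).
  pose proof (HB y HYy) as Hli.
  rewrite HI, Hw, inv_ln_pow_S, Hw, Hyw in Hli.
  replace (y * w ^ S K) with (exp x * (u / D) * w ^ K) in Hli
    by (rewrite <- Hyw; simpl; ring).
  apply (abs_sub_rescale (exp x)); [lra | apply exp_neg_mul_exp|].
  replace (exp x - 1 - exp x * (u / D * fact_series K w)) with
    (exp x - 1 - exp x * (u / D) * fact_series K w) by ring.
  replace (B * (u / D) * w ^ K * exp x) with (B * (exp x * (u / D) * w ^ K)) by ring.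
  exact Hli.
Qed.

Lemma ali_ln_ratio_lower :
  ultimately (fun x => x + ln (ln (ali 1)) <= x * ali_ln_ratio x).
Proof.
  destruct (Hali 1) as [Hy0 _]. pose proof (ln_pos_gt_1 _ Hy0) as Hc.
  exists 1. intros x Hx. destruct (ali_exp_lower x ltac:(lra)) as [_ Hlow].
  rewrite <- ln_ali_exp by lra. pose proof (exp_pos x).
  rewrite <- (ln_exp x) at 1. rewrite <- ln_mult by lra.
  apply ln_le; [nra | lra].
Qed.

Lemma ali_ln_ratio_ge_half : ultimately (fun x => 1/2 <= ali_ln_ratio x /\ / x / ali_ln_ratio x <= 2 * / x).
Proof.
  set (c := ln (ln (ali 1))).
  eapply ultimately_mono; [|exact (ultimately_and _ _ ali_ln_ratio_lower (ultimately_ge (2 * Rabs c + 1)))].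
  intros x [Hlow Hx]. fold c in Hlow. pose proof (Rabs_pos c) as Hc. pose proof (Rle_abs (- c)) as Hc'.
  rewrite Rabs_Ropp in Hc'.
  assert (HD : 1/2 <= ali_ln_ratio x) by (apply (Rmult_le_reg_l x); nra).
  split; [exact HD|]. unfold Rdiv. rewrite Rmult_comm.
  apply Rmult_le_compat_r; [left; apply Rinv_0_lt_compat; lra|].
  apply (Rmult_le_reg_r (ali_ln_ratio x)); [lra|]. rewrite Rinv_l by lra. lra.
Qed.

Lemma ali_ratio_div_bounds :
  ultimately (fun x => 0 < ali_ln_ratio x /\ 1/2 <= ali_ratio x / ali_ln_ratio x <= 5/2).
Proof.
  destruct (ali_ratio_key_bound 1) as [A [B Hkey]].
  assert (HA : 0 < / (4 * (Rabs A + 1))) by (apply Rinv_0_lt_compat; pose proof (Rabs_pos A); lra).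
  eapply ultimately_mono; [|exact (ultimately_and _ _ Hkey (ultimately_and _ _ ali_ln_ratio_ge_half
    (ultimately_and _ _ (ultimately_exp_neg_le _ HA) (ultimately_ge (20 * (Rabs B + 1))))))].
  intros x ((HD & Hb) & (HD2 & Hw) & He & Hx).
  pose proof (Rabs_pos A). pose proof (Rabs_pos B). pose proof (exp_pos (- x)).
  assert (Hx0 : 0 < x) by lra.
  pose proof (ali_ratio_pos x Hx0) as Hu.
  set (u := ali_ratio x) in *. set (D := ali_ln_ratio x) in *. set (w := / x / D) in *.
  set (r := u / D) in *.
  assert (Hr : 0 < r) by (apply Rdiv_lt_0_compat; lra).
  simpl fact_series in Hb. rewrite pow_1 in Hb. replace (0 + 1 * 1) with 1 in Hb by ring.
  rewrite Rmult_1_r in Hb. apply Rabs_le_between in Hb.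
  assert (HAe : A * exp (- x) <= 1/4).
  { apply Rle_trans with (Rabs A * exp (- x)); [apply Rmult_le_compat_r; [lra | apply Rle_abs]|].
    apply Rle_trans with (Rabs A * / (4 * (Rabs A + 1))); [apply Rmult_le_compat_l; lra|].
    apply (Rmult_le_reg_r (4 * (Rabs A + 1))); [lra|]. field_simplify; lra. }
  assert (HBw : B * w <= 1/10).
  { assert (Hw0 : 0 < w) by (unfold w; apply Rdiv_lt_0_compat; [apply Rinv_0_lt_compat|]; lra).
    apply Rle_trans with (Rabs B * (2 * / x)); [pose proof (Rle_abs B); nra|].
    apply (Rmult_le_reg_r x); [lra|]. field_simplify; lra. }
  assert (B * r * w <= r / 10) by (replace (B * r * w) with (r * (B * w)) by ring; nra).
  split; [exact HD|]. split; lra.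
Qed.

Lemma ali_ratio_bounds : ultimately (fun x =>
  1/2 <= ali_ln_ratio x <= 3 /\ Rabs (ln (ali_ratio x)) <= 10 /\
  1/2 <= ali_ratio x / ali_ln_ratio x <= 5/2 /\ / x / ali_ln_ratio x <= 2 * / x).
Proof.
  eapply ultimately_mono; [|exact (ultimately_and _ _ ali_ratio_div_bounds
    (ultimately_and _ _ ali_ln_ratio_ge_half (ultimately_and _ _ ultimately_ell_bounds (ultimately_ge 10))))].
  intros x ((HD & Hr) & (HD2 & Hw) & (Hx0 & _ & Hi & He) & Hx).
  pose proof (ali_ratio_pos x Hx0) as Hu.
  set (u := ali_ratio x) in *. set (D := ali_ln_ratio x) in *.
  assert (Hur : u = u / D * D) by (field; lra).
  assert (Hu4 : 1/4 <= u) by nra.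
  pose proof (ln_le_sub1 u Hu) as Hlnu.
  assert (Hln4 : - 3 <= ln u).
  { pose proof (ln_le_sub1 4 ltac:(lra)). assert (Hl4 : ln (/ 4) <= ln u) by (apply ln_le; lra).
    rewrite ln_Rinv in Hl4 by lra. lra. }
  assert (HxlnU : / x * ln u <= / x * u) by (apply Rmult_le_compat_l; lra).
  assert (Hxu : / x * u <= D / 4).
  { assert (Hu52 : u <= 5/2 * D) by nra.
    assert (Hx10 : / x <= / 10) by (apply Rinv_le_contravar; lra).
    apply Rle_trans with (/ 10 * (5/2 * D)); [apply Rmult_le_compat; lra | lra]. }
  assert (HDdef : D = 1 + ell x + / x * ln u) by reflexivity.
  assert (HD3 : D <= 3) by lra.
  repeat split; try lra. apply Rabs_le. nra.
Qed.

Lemma bigO_inv_ali_ln_ratio : bigO (fun x => / ali_ln_ratio x) (fun _ => 1).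
Proof.
  apply (bigO_bounded_of_le _ 2). eapply ultimately_mono; [|exact ali_ratio_bounds].
  intros x ((HD & _) & _). rewrite Rabs_pos_eq by (left; apply Rinv_0_lt_compat; lra).
  apply (Rmult_le_reg_r (ali_ln_ratio x)); [lra|]. rewrite Rinv_l by lra. lra.
Qed.

Lemma bigO_inv_div_ali_ln_ratio : bigO (fun x => / x / ali_ln_ratio x) ell.
Proof. exact (bigO_mul_bounded _ _ _ bigO_inv_ell bigO_inv_ali_ln_ratio). Qed.

Lemma bigO_ali_ln_ratio_sub1 : bigO (fun x => ali_ln_ratio x - 1) ell.
Proof.
  apply (bigO_ext (fun x => ell x + / x * ln (ali_ratio x))); [exists 0; intros; unfold ali_ln_ratio; ring|].
  apply bigO_add.
  - apply bigO_refl. eapply ultimately_mono; [|exact ultimately_ell_bounds]. intros x H; lra.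
  - apply (bigO_mul_bounded _ _ _ bigO_inv_ell), (bigO_bounded_of_le _ 10).
    eapply ultimately_mono; [|exact ali_ratio_bounds]. intros x (_ & H & _). exact H.
Qed.

Lemma bigO_ali_ratio_div : bigO (fun x => ali_ratio x / ali_ln_ratio x) (fun _ => 1).
Proof.
  apply (bigO_bounded_of_le _ (5/2)). eapply ultimately_mono; [|exact ali_ratio_bounds].
  intros x (_ & _ & Hr & _). rewrite Rabs_pos_eq; lra.
Qed.

Lemma bigO_ali_key_remainder K :
  bigO (fun x => 1 - ali_ratio x / ali_ln_ratio x * fact_series K (/ x / ali_ln_ratio x))
       (fun x => ell x ^ K).
Proof.
  destruct (ali_ratio_key_bound K) as [A [B Hkey]].
  apply (bigO_trans _ (fun x => A * exp (- x) + B * ((/ x / ali_ln_ratio x) ^ K * (ali_ratio x / ali_ln_ratio x)))).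
  - apply bigO_of_le. eapply ultimately_mono; [|exact Hkey]. intros x [_ Hb].
    eapply Rle_trans; [exact Hb | right; ring].
  - apply bigO_add; apply bigO_scal; [apply bigO_exp_neg|].
    exact (bigO_mul_bounded _ _ _ (bigO_pow _ _ K bigO_inv_div_ali_ln_ratio) bigO_ali_ratio_div).
Qed.

Lemma bigO_ali_ratio_sub1 : bigO (fun x => ali_ratio x - 1) ell.
Proof.
  assert (Hr1 : bigO (fun x => 1 - ali_ratio x / ali_ln_ratio x) ell).
  { apply (bigO_rhs_ext _ _ _ (fun x => pow_1 (ell x))).
    eapply bigO_ext; [|exact (bigO_ali_key_remainder 1)]. exists 0. intros x _. simpl. ring. }
  assert (HD : bigO ali_ln_ratio (fun _ => 1)).
  { apply (bigO_bounded_of_le _ 3). eapply ultimately_mono; [|exact ali_ratio_bounds].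
    intros x ((H1 & H2) & _). rewrite Rabs_pos_eq; lra. }
  apply (bigO_ext (fun x => (ali_ln_ratio x - 1) - (1 - ali_ratio x / ali_ln_ratio x) * ali_ln_ratio x)).
  - eapply ultimately_mono; [|exact ali_ratio_bounds]. intros x ((H1 & _) & _). field. lra.
  - exact (bigO_sub _ _ _ bigO_ali_ln_ratio_sub1 (bigO_mul_bounded _ _ _ Hr1 HD)).
Qed.

Lemma expansion_ali_ln_ratio N : has_expansion N ali_ratio -> has_expansion (S N) ali_ln_ratio.
Proof.
  intros Hu.
  assert (Hlnu : has_expansion N (fun x => ln (1 + (ali_ratio x - 1)))).
  { apply expansion_ln1p; [apply expansion_sub; [exact Hu | apply expansion_const]|].
    exact bigO_ali_ratio_sub1. }
  apply (expansion_eq (S N) (fun x => (1 + ell x) + / x * ln (1 + (ali_ratio x - 1))));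
    [intros x; unfold ali_ln_ratio; do 3 f_equal; ring|].
  apply expansion_add; [apply expansion_add; [apply expansion_const | apply expansion_ell]|].
  exact (expansion_inv_mul N _ Hlnu).
Qed.

Lemma expansion_ali_ratio_succ N : has_expansion N ali_ratio -> has_expansion (S N) ali_ratio.
Proof.
  intros Hu.
  set (D := ali_ln_ratio). set (w := fun x => / x / D x).
  set (K := S (S N)). set (H := fun x => fact_series K (w x)).
  assert (ED : has_expansion (S N) D) by exact (expansion_ali_ln_ratio N Hu).
  assert (Ew : has_expansion (S N) w).
  { exact (expansion_mul (S N) _ _ (expansion_inv (S N))
             (expansion_inv_near_1 _ _ ED bigO_ali_ln_ratio_sub1)). }
  assert (OH : bigO (fun x => H x - 1) ell) by exact (bigO_fact_series_sub1 _ _ bigO_inv_div_ali_ln_ratio).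
  assert (Etarget : has_expansion (S N) (fun x => D x * / H x)).
  { exact (expansion_mul _ _ _ ED (expansion_inv_near_1 _ _ (expansion_fact_series _ K _ Ew) OH)). }
  apply (expansion_close _ _ _ Etarget).
  (* u - D / H = (1 - (u / D) H) (- D / H), and the key bound makes the first factor tiny *)
  apply (bigO_ext (fun x => (1 - ali_ratio x / D x * H x) * - (D x * / H x))).
  - eapply ultimately_mono; [|exact (ultimately_and _ _ ali_ratio_bounds (bigO_ell_small _ (1/2) OH ltac:(lra)))].
    intros x [((HD & _) & _) HH]. apply Rabs_le_between in HH. unfold D in *. field. split; lra.
  - apply bigO_mul_bounded.
    + exact (bigO_ali_key_remainder K).
    + apply bigO_opp. exact (expansion_bounded _ _ Etarget).
Qed.

Lemma ali_ratio_expansion N : has_expansion N ali_ratio.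
Proof.
  induction N as [|N IH]; [|exact (expansion_ali_ratio_succ N IH)].
  apply (expansion_close 0 (fun _ => 1)); [apply expansion_const|].
  exact (bigO_rhs_ext _ _ _ (fun x => eq_sym (pow_1 (ell x))) bigO_ali_ratio_sub1).
Qed.

End Ali.

(** * Uniqueness of the coefficients *)

Definition mon_coef (m : monomial) (n k : nat) : R :=
  let '(c, a, b) := m in if (Nat.eqb a k && Nat.eqb (a + b) n)%bool then c else 0.

Fixpoint lp_coef (l : list monomial) (n k : nat) : R :=
  match l with nil => 0 | m :: l' => mon_coef m n k + lp_coef l' n k end.

Fixpoint lp_norm (l : list monomial) : R :=
  match l with nil => 0 | (c, _, _) :: l' => Rabs c + lp_norm l' end.

Definition coef_sum (d : nat -> nat -> R) (N M : nat) (x : R) : R :=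
  sum_f_R0 (fun n => sum_f_R0 (fun k => d n k * ln x ^ k / x ^ n) M) N.

Lemma sum_f_R0_zero f N : (forall n, (n <= N)%nat -> f n = 0) -> sum_f_R0 f N = 0.
Proof.
  intros H. induction N as [|N IH]; simpl; [apply H; lia|].
  rewrite IH, H by (lia || (intros; apply H; lia)). ring.
Qed.

Lemma sum_f_R0_single f n0 N :
  (forall n, n <> n0 -> f n = 0) -> sum_f_R0 f N = if Nat.leb n0 N then f n0 else 0.
Proof.
  intros H. induction N as [|N IH].
  - simpl. destruct n0; simpl; [reflexivity | apply H; lia].
  - rewrite tech5, IH. destruct (Nat.eq_dec n0 (S N)) as [->|Hne].
    + rewrite (proj2 (Nat.leb_nle (S N) N)), Nat.leb_refl by lia. ring.
    + rewrite (H (S N)), Rplus_0_r by lia.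
      destruct (Nat.leb n0 N) eqn:E; symmetry; apply Nat.leb_le in E || apply Nat.leb_nle in E.
      * rewrite (proj2 (Nat.leb_le n0 (S N))) by lia. reflexivity.
      * rewrite (proj2 (Nat.leb_nle n0 (S N))) by lia. reflexivity.
Qed.

Lemma coef_sum_add d1 d2 N M x :
  coef_sum (fun n k => d1 n k + d2 n k) N M x = coef_sum d1 N M x + coef_sum d2 N M x.
Proof.
  unfold coef_sum. rewrite <- sum_plus. apply sum_eq. intros n _.
  rewrite <- sum_plus. apply sum_eq. intros k _. unfold Rdiv. ring.
Qed.

Lemma coef_sum_sub d1 d2 N M x :
  coef_sum (fun n k => d1 n k - d2 n k) N M x = coef_sum d1 N M x - coef_sum d2 N M x.
Proof.
  unfold coef_sum. rewrite <- minus_sum. apply sum_eq. intros n _.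
  rewrite <- minus_sum. apply sum_eq. intros k _. unfold Rdiv. ring.
Qed.

Lemma coef_sum_mon c a b N x :
  coef_sum (mon_coef (c, a, b)) N N x = if Nat.leb (a + b) N then c * ln x ^ a / x ^ (a + b) else 0.
Proof.
  unfold coef_sum. rewrite (sum_f_R0_single _ (a + b)).
  - destruct (Nat.leb (a + b) N) eqn:E; [apply Nat.leb_le in E | reflexivity].
    rewrite (sum_f_R0_single _ a).
    + rewrite (proj2 (Nat.leb_le a N)) by lia. simpl. rewrite !Nat.eqb_refl. reflexivity.
    + intros k Hk. simpl. rewrite (proj2 (Nat.eqb_neq a k)) by auto. simpl. unfold Rdiv. ring.
  - intros n Hn. apply sum_f_R0_zero. intros k _. simpl.
    rewrite (proj2 (Nat.eqb_neq (a + b) n)) by auto. rewrite Bool.andb_false_r. unfold Rdiv. ring.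
Qed.

Lemma mon_eval_eq c a b x : 0 < x -> mon_eval (c, a, b) x = c * ln x ^ a / x ^ (a + b).
Proof.
  intros Hx. simpl. unfold ell, Rdiv. rewrite Rpow_mult_distr, !pow_inv, pow_add.
  field. split; apply pow_nonzero; lra.
Qed.

Lemma lp_eval_sub_coef_sum l N x :
  exp 1 <= x -> Rabs (lp_eval l x - coef_sum (lp_coef l) N N x) <= lp_norm l * ell x ^ S N.
Proof.
  intros Hx. destruct (ell_bounds x Hx) as (Hx0 & _ & Hi & He).
  induction l as [|[[c a] b] l IH].
  - cbn [lp_eval lp_norm]. unfold coef_sum.
    rewrite (sum_f_R0_zero _ N); [rewrite Rminus_0_r, Rabs_R0; lra|].
    intros n _. apply sum_f_R0_zero. intros k _. simpl. unfold Rdiv. ring.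
  - change (coef_sum (lp_coef ((c, a, b) :: l)) N N x)
      with (coef_sum (fun n k => mon_coef (c, a, b) n k + lp_coef l n k) N N x).
    rewrite coef_sum_add. cbn [lp_eval lp_norm].
    replace (mon_eval (c, a, b) x + lp_eval l x - (coef_sum (mon_coef (c, a, b)) N N x + coef_sum (lp_coef l) N N x))
      with ((mon_eval (c, a, b) x - coef_sum (mon_coef (c, a, b)) N N x) + (lp_eval l x - coef_sum (lp_coef l) N N x))
      by ring.
    eapply Rle_trans; [apply Rabs_triang|]. rewrite Rmult_plus_distr_r.
    apply Rplus_le_compat; [|exact IH].
    rewrite coef_sum_mon. destruct (Nat.leb (a + b) N) eqn:E.
    + rewrite mon_eval_eq, Rminus_diag, Rabs_R0 by lra.
      apply Rmult_le_pos; [apply Rabs_pos | apply pow_le; lra].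
    + (* a monomial of total degree a + b > N is O(ell^(a+b)) *)
      apply Nat.leb_nle in E. rewrite Rminus_0_r. simpl mon_eval.
      rewrite !Rabs_mult, <- !RPow_abs, (Rabs_pos_eq (ell x)), (Rabs_pos_eq (/ x)) by lra.
      rewrite Rmult_assoc. apply Rmult_le_compat_l; [apply Rabs_pos|].
      apply Rle_trans with (ell x ^ a * ell x ^ b).
      { apply Rmult_le_compat_l; [apply pow_le; lra | apply pow_incr; lra]. }
      rewrite <- pow_add. apply pow_le_pow_le_1; [lra | lia].
Qed.

Lemma ultimately_ln_small J eps : 0 < eps -> ultimately (fun x => ln x ^ J / x + / ln x <= eps).
Proof.
  intros He. set (F := INR (fact (S J))). set (K := F + 1).
  assert (HF : 0 <= F) by apply pos_INR.
  exists (Rmax (exp 1) (exp (K / eps))). intros x Hx.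
  destruct (ell_bounds x (Rle_trans _ _ _ (Rmax_l _ _) Hx)) as (Hx0 & Hl & _).
  assert (HL : K / eps <= ln x).
  { rewrite <- (ln_exp (K / eps)). apply ln_le; [apply exp_pos|].
    eapply Rle_trans; [apply Rmax_r | exact Hx]. }
  pose proof (pow_le_fact_exp (S J) (ln x) ltac:(lra)) as Hpow.
  rewrite exp_ln in Hpow by lra. change (ln x ^ S J) with (ln x * ln x ^ J) in Hpow.
  set (L := ln x) in *.
  assert (Hfrac : L ^ J / x <= F / L).
  { apply (Rmult_le_reg_r (x * L)); [nra|].
    replace (L ^ J / x * (x * L)) with (L * L ^ J) by (field; lra).
    replace (F / L * (x * L)) with (F * x) by (field; lra). exact Hpow. }
  assert (HKL : K / L <= eps).
  { assert (K <= eps * L).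
    { replace K with (eps * (K / eps)) by (field; lra). apply Rmult_le_compat_l; lra. }
    apply (Rmult_le_reg_r L); [lra|]. replace (K / L * L) with K by (field; lra). lra. }
  unfold K in HKL. unfold Rdiv in *. lra.
Qed.

Lemma vanish_of_ultimately_le a K J :
  ultimately (fun x => Rabs a <= K * (ln x ^ J / x + / ln x)) -> a = 0.
Proof.
  intros H. destruct (Req_dec a 0) as [Ha | Ha]; [exact Ha|]. exfalso.
  pose proof (Rabs_pos_lt a Ha) as Ha'. pose proof (Rabs_pos K).
  set (eps := Rabs a / (2 * (Rabs K + 1))).
  assert (He : 0 < eps) by (unfold eps; apply Rdiv_lt_0_compat; lra).
  destruct (ultimately_and _ _ H (ultimately_and _ _ (ultimately_ln_small J eps He) ultimately_ell_bounds))
    as [X HX].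
  destruct (HX X (Rle_refl X)) as (H1 & H2 & Hx0 & Hl & _).
  assert (0 <= ln X ^ J / X + / ln X).
  { apply Rplus_le_le_0_compat; [apply Rdiv_le_0_compat; [apply pow_le |]; lra|].
    left; apply Rinv_0_lt_compat; lra. }
  assert (K * (ln X ^ J / X + / ln X) <= Rabs K * eps)
    by (apply Rle_trans with (Rabs K * (ln X ^ J / X + / ln X));
        [apply Rmult_le_compat_r; [lra | apply Rle_abs] | apply Rmult_le_compat_l; lra]).
  assert (Rabs K * eps < Rabs a).
  { unfold eps. apply (Rmult_lt_reg_r (2 * (Rabs K + 1))); [lra|]. field_simplify; [nra | lra]. }
  lra.
Qed.

Lemma sum_pow_ln_bound c M x : 1 <= ln x ->
  Rabs (sum_f_R0 (fun k => c k * ln x ^ k) M) <= sum_f_R0 (fun k => Rabs (c k)) M * ln x ^ M.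
Proof.
  intros Hl. eapply Rle_trans; [apply Rsum_abs|]. rewrite Rmult_comm, scal_sum.
  apply sum_Rle. intros k Hk. rewrite Rabs_mult, <- RPow_abs, (Rabs_pos_eq (ln x)) by lra.
  apply Rmult_le_compat_l; [apply Rabs_pos | apply Rle_pow; auto].
Qed.

Lemma top_coef_zero a C T J M :
  ultimately (fun x => Rabs a * ln x ^ S M <= C * (ln x ^ J / x) + T * ln x ^ M) -> a = 0.
Proof.
  intros H. apply (vanish_of_ultimately_le a (Rabs C + Rabs T) J).
  eapply ultimately_mono; [|exact (ultimately_and _ _ H ultimately_ell_bounds)].
  intros x (Hb & Hx0 & Hl & _).
  set (L := ln x) in *. set (q := L ^ J / x) in *.
  assert (Hq : 0 <= q) by (apply Rdiv_le_0_compat; [apply pow_le |]; lra).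
  assert (HM : 1 <= L ^ M) by (apply pow_R1_Rle; lra).
  change (L ^ S M) with (L * L ^ M) in Hb.
  pose proof (Rabs_pos C). pose proof (Rabs_pos T). pose proof (Rabs_pos a).
  assert (HC : C * q <= Rabs C * q) by (apply Rmult_le_compat_r; [lra | apply Rle_abs]).
  assert (HT : T * L ^ M <= Rabs T * L ^ M) by (apply Rmult_le_compat_r; [lra | apply Rle_abs]).
  apply (Rmult_le_reg_r (L * L ^ M)); [nra|].
  replace ((Rabs C + Rabs T) * (q + / L) * (L * L ^ M))
    with (Rabs C * q * (L * L ^ M) + Rabs T * L ^ M + (Rabs C * L ^ M + Rabs T * q * (L * L ^ M)))
    by (field; lra).
  assert (Rabs C * q <= Rabs C * q * (L * L ^ M)) by (rewrite <- (Rmult_1_r (Rabs C * q)) at 1; apply Rmult_le_compat_l; nra).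
  assert (0 <= Rabs T * q * (L * L ^ M)) by (apply Rmult_le_pos; apply Rmult_le_pos; nra).
  assert (0 <= Rabs C * L ^ M) by (apply Rmult_le_pos; lra).
  lra.
Qed.

Lemma log_poly_zero M : forall c C J,
  ultimately (fun x => Rabs (sum_f_R0 (fun k => c k * ln x ^ k) M) <= C * (ln x ^ J / x)) ->
  forall k, (k <= M)%nat -> c k = 0.
Proof.
  induction M as [|M IH]; intros c C J H k Hk.
  - replace k with 0%nat by lia. apply (vanish_of_ultimately_le (c 0%nat) (Rabs C) J).
    eapply ultimately_mono; [|exact (ultimately_and _ _ H ultimately_ell_bounds)].
    intros x (Hb & Hx0 & Hl & _). simpl in Hb. rewrite Rmult_1_r in Hb.
    assert (0 <= ln x ^ J / x) by (apply Rdiv_le_0_compat; [apply pow_le |]; lra).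
    assert (0 < / ln x) by (apply Rinv_0_lt_compat; lra).
    assert (C * (ln x ^ J / x) <= Rabs C * (ln x ^ J / x)) by (apply Rmult_le_compat_r; [lra | apply Rle_abs]).
    pose proof (Rabs_pos C). nra.
  - set (T := sum_f_R0 (fun k => Rabs (c k)) M).
    assert (Htop : c (S M) = 0).
    { apply (top_coef_zero _ C T J M).
      eapply ultimately_mono; [|exact (ultimately_and _ _ H ultimately_ell_bounds)].
      intros x (Hb & _ & Hl & _). rewrite tech5 in Hb.
      pose proof (sum_pow_ln_bound c M x Hl) as Hs. fold T in Hs.
      rewrite <- (Rabs_pos_eq (ln x ^ S M)), <- Rabs_mult by (apply pow_le; lra).
      pose proof (Rabs_triang (sum_f_R0 (fun k => c k * ln x ^ k) M + c (S M) * ln x ^ S M)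
                              (- sum_f_R0 (fun k => c k * ln x ^ k) M)) as Htri.
      rewrite Rabs_Ropp in Htri.
      replace (sum_f_R0 (fun k => c k * ln x ^ k) M + c (S M) * ln x ^ S M
               + - sum_f_R0 (fun k => c k * ln x ^ k) M) with (c (S M) * ln x ^ S M) in Htri by ring.
      lra. }
    destruct (Nat.eq_dec k (S M)) as [-> | Hne]; [exact Htop|].
    apply (IH c C J); [|lia].
    eapply ultimately_mono; [|exact H]. intros x Hb. cbv beta in Hb.
    rewrite tech5, Htop, Rmult_0_l, Rplus_0_r in Hb. exact Hb.
Qed.

Lemma bigO_coef_sum d N M : bigO (coef_sum d N M) (fun x => ln x ^ M).
Proof.
  exists (sum_f_R0 (fun n => sum_f_R0 (fun k => Rabs (d n k)) M) N).
  eapply ultimately_mono; [|exact (ultimately_and _ _ ultimately_ell_bounds (ultimately_ge 1))].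
  intros x ((Hx0 & Hl & _) & Hx1). unfold coef_sum. eapply Rle_trans; [apply Rsum_abs|].
  rewrite Rmult_comm, scal_sum. apply sum_Rle. intros n _.
  eapply Rle_trans; [apply Rsum_abs|].
  rewrite Rmult_comm, scal_sum. apply sum_Rle. intros k Hk.
  unfold Rdiv. rewrite !Rabs_mult, <- RPow_abs, (Rabs_pos_eq (ln x)), (Rabs_pos_eq (/ x ^ n))
    by (lra || (left; apply Rinv_0_lt_compat, pow_lt; lra)).
  assert (ln x ^ k <= ln x ^ M) by (apply Rle_pow; auto).
  assert (/ x ^ n <= 1) by (rewrite <- Rinv_1; apply Rinv_le_contravar; [lra | apply pow_R1_Rle; lra]).
  assert (0 < / x ^ n) by (apply Rinv_0_lt_compat, pow_lt; lra).
  pose proof (pow_le (ln x) k ltac:(lra)). pose proof (Rabs_pos (d n k)).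
  rewrite Rmult_assoc. apply Rmult_le_compat_l; [lra | nra].
Qed.

Lemma coef_sum_shift d N M x : 0 < x ->
  coef_sum d (S N) M x
  = sum_f_R0 (fun k => d 0%nat k * ln x ^ k) M + / x * coef_sum (fun n k => d (S n) k) N M x.
Proof.
  intros Hx. unfold coef_sum. rewrite decomp_sum by lia. simpl pred. f_equal.
  - apply sum_eq. intros k _. simpl. field.
  - rewrite scal_sum. apply sum_eq. intros n _. rewrite Rmult_comm, scal_sum.
    apply sum_eq. intros k _. simpl. field. repeat split; try apply pow_nonzero; lra.
Qed.

Lemma coef_sum_row0_zero d N M C J :
  ultimately (fun x => Rabs (coef_sum d (S N) M x) <= C * (ln x ^ J / x ^ S (S N))) ->
  forall k, (k <= M)%nat -> d 0%nat k = 0.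
Proof.
  intros H. destruct (bigO_coef_sum (fun n k => d (S n) k) N M) as [A HA].
  apply (log_poly_zero M (d 0%nat) (Rabs C + Rabs A) (J + M)).
  eapply ultimately_mono; [|exact (ultimately_and _ _ H (ultimately_and _ _ HA
    (ultimately_and _ _ ultimately_ell_bounds (ultimately_ge 1))))].
  intros x (H1 & H2 & (Hx0 & Hl & _) & Hx1).
  rewrite coef_sum_shift in H1 by lra.
  set (q := sum_f_R0 (fun k => d 0%nat k * ln x ^ k) M) in *.
  set (r := coef_sum (fun n k => d (S n) k) N M x) in *.
  assert (Hix : 0 < / x) by (apply Rinv_0_lt_compat; lra).
  assert (Hq : Rabs q <= Rabs (q + / x * r) + / x * Rabs r).
  { replace q with ((q + / x * r) - / x * r) at 1 by ring.
    eapply Rle_trans; [apply Rabs_triang|]. rewrite Rabs_Ropp, Rabs_mult, (Rabs_pos_eq (/ x)); lra. }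
  assert (HlJ : ln x ^ J <= ln x ^ (J + M)) by (apply Rle_pow; [lra | lia]).
  assert (HlM : ln x ^ M <= ln x ^ (J + M)) by (apply Rle_pow; [lra | lia]).
  assert (Hxp : x <= x ^ S (S N)) by (rewrite <- (pow_1 x) at 1; apply Rle_pow; [lra | lia]).
  assert (T1 : C * (ln x ^ J / x ^ S (S N)) <= Rabs C * (ln x ^ (J + M) / x)).
  { apply Rle_trans with (Rabs C * (ln x ^ J / x ^ S (S N))).
    - apply Rmult_le_compat_r; [|apply Rle_abs].
      apply Rdiv_le_0_compat; [apply pow_le | apply pow_lt]; lra.
    - apply Rmult_le_compat_l; [apply Rabs_pos|]. unfold Rdiv.
      apply Rmult_le_compat; try (apply pow_le; lra); try (left; apply Rinv_0_lt_compat, pow_lt; lra); auto.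
      apply Rinv_le_contravar; lra. }
  assert (T2 : / x * Rabs r <= Rabs A * (ln x ^ (J + M) / x)).
  { unfold Rdiv. rewrite (Rmult_comm (ln x ^ (J + M))), <- Rmult_assoc, (Rmult_comm (Rabs A)), Rmult_assoc.
    apply Rmult_le_compat_l; [lra|]. apply Rle_trans with (A * ln x ^ M); [exact H2|].
    pose proof (pow_le (ln x) M ltac:(lra)). pose proof (Rle_abs A). pose proof (Rabs_pos A). nra. }
  lra.
Qed.

Lemma coef_sum_zero N M : forall d C J,
  ultimately (fun x => Rabs (coef_sum d N M x) <= C * (ln x ^ J / x ^ S N)) ->
  forall n k, (n <= N)%nat -> (k <= M)%nat -> d n k = 0.
Proof.
  induction N as [|N IH]; intros d C J H n k Hn Hk.
  - replace n with 0%nat by lia. apply (log_poly_zero M (d 0%nat) C J); [|exact Hk].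
    eapply ultimately_mono; [|exact H]. intros x Hb. cbv beta in Hb.
    unfold coef_sum in Hb. simpl in Hb. rewrite Rmult_1_r in Hb.
    replace (sum_f_R0 (fun k => d 0%nat k * ln x ^ k) M)
      with (sum_f_R0 (fun k => d 0%nat k * ln x ^ k / 1) M) by (apply sum_eq; intros; field).
    exact Hb.
  - pose proof (coef_sum_row0_zero d N M C J H) as Hrow0.
    destruct n as [|n]; [exact (Hrow0 k Hk)|].
    apply (IH (fun n k => d (S n) k) C J); [|lia | exact Hk].
    eapply ultimately_mono; [|exact (ultimately_and _ _ H ultimately_ell_bounds)].
    intros x (Hb & Hx0 & _).
    rewrite coef_sum_shift, (sum_f_R0_zero _ M) in Hb by (lra || (intros; rewrite Hrow0 by lia; ring)).
    rewrite Rplus_0_l, Rabs_mult, (Rabs_pos_eq (/ x)) in Hb by (left; apply Rinv_0_lt_compat; lra).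
    apply (Rmult_le_reg_l (/ x)); [apply Rinv_0_lt_compat; lra|].
    replace (/ x * (C * (ln x ^ J / x ^ S N))) with (C * (ln x ^ J / x ^ S (S N))); [exact Hb|].
    change (x ^ S (S N)) with (x * x ^ S N). field. split; [apply pow_nonzero|]; lra.
Qed.

Lemma ell_pow x n : 0 < x -> ell x ^ n = ln x ^ n / x ^ n.
Proof. intros Hx. unfold ell, Rdiv. rewrite Rpow_mult_distr, pow_inv. reflexivity. Qed.

Lemma lp_coef_gt l n k : (n < k)%nat -> lp_coef l n k = 0.
Proof.
  intros H. induction l as [|[[c a] b] l IH]; simpl; [reflexivity|]. rewrite IH.
  destruct (Nat.eqb a k) eqn:E1; destruct (Nat.eqb (a + b) n) eqn:E2; simpl; try ring.
  apply Nat.eqb_eq in E1, E2. lia.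
Qed.

Lemma lp_coef_unique l1 l2 N :
  bigO (fun x => lp_eval l1 x - lp_eval l2 x) (fun x => ell x ^ S N) ->
  forall n k, (n <= N)%nat -> (k <= N)%nat -> lp_coef l1 n k = lp_coef l2 n k.
Proof.
  intros [C HC] n k Hn Hk. apply Rminus_diag_uniq.
  apply (coef_sum_zero N N (fun n k => lp_coef l1 n k - lp_coef l2 n k)
           (Rabs C + lp_norm l1 + lp_norm l2) (S N)); auto.
  eapply ultimately_mono; [|exact (ultimately_and _ _ HC (ultimately_ge (exp 1)))].
  intros x [Hb Hx]. destruct (ell_bounds x Hx) as (Hx0 & _ & Hi & _).
  rewrite coef_sum_sub, <- (ell_pow x (S N) Hx0).
  pose proof (lp_eval_sub_coef_sum l1 N x Hx) as H1. pose proof (lp_eval_sub_coef_sum l2 N x Hx) as H2.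
  set (e1 := lp_eval l1 x - coef_sum (lp_coef l1) N N x) in *.
  set (e2 := lp_eval l2 x - coef_sum (lp_coef l2) N N x) in *.
  replace (coef_sum (lp_coef l1) N N x - coef_sum (lp_coef l2) N N x)
    with (lp_eval l1 x - lp_eval l2 x + (- e1 + e2)) by (unfold e1, e2; ring).
  pose proof (Rabs_triang (lp_eval l1 x - lp_eval l2 x) (- e1 + e2)) as T1.
  pose proof (Rabs_triang (- e1) e2) as T2. rewrite Rabs_Ropp in T2.
  assert (C * ell x ^ S N <= Rabs C * ell x ^ S N)
    by (apply Rmult_le_compat_r; [apply pow_le; lra | apply Rle_abs]).
  lra.
Qed.

Lemma lp_coef_agree f l1 l2 N1 N2 n k :
  bigO (fun x => f x - lp_eval l1 x) (fun x => ell x ^ S N1) ->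
  bigO (fun x => f x - lp_eval l2 x) (fun x => ell x ^ S N2) ->
  (n <= N1)%nat -> (n <= N2)%nat -> lp_coef l1 n k = lp_coef l2 n k.
Proof.
  intros H1 H2 Hn1 Hn2. destruct (Nat.le_gt_cases k n) as [Hk | Hk].
  - apply (lp_coef_unique _ _ n); auto.
    apply (bigO_ext (fun x => (f x - lp_eval l2 x) - (f x - lp_eval l1 x))); [exists 0; intros; ring|].
    apply bigO_sub; eapply bigO_trans; try eassumption; apply bigO_ell_pow_le; lia.
  - rewrite !lp_coef_gt by exact Hk. reflexivity.
Qed.

Lemma sum_f_R0_trunc f m N :
  (m <= N)%nat -> (forall k, (m < k)%nat -> f k = 0) -> sum_f_R0 f N = sum_f_R0 f m.
Proof.
  intros Hm H. induction N as [|N IH]; [replace m with 0%nat by lia; reflexivity|].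
  destruct (Nat.eq_dec m (S N)) as [-> | Hne]; [reflexivity|].
  rewrite tech5, IH, (H (S N)) by lia. ring.
Qed.

Lemma coef_sum_asum d a x N : 0 < x ->
  (forall n k, (n < k)%nat -> d n k = 0) ->
  (forall m k, (m < N)%nat -> d (S m) k = a m k) ->
  coef_sum d N N x = d 0%nat 0%nat + asum a x N.
Proof.
  intros Hx Hgt Ha.
  assert (Hrow : forall n, (n <= N)%nat ->
    sum_f_R0 (fun k => d n k * ln x ^ k / x ^ n) N = sum_f_R0 (fun k => d n k * ln x ^ k) n / x ^ n).
  { intros n Hn. rewrite (sum_f_R0_trunc _ n N Hn) by (intros k Hk; rewrite Hgt by exact Hk; unfold Rdiv; ring).
    unfold Rdiv. rewrite (Rmult_comm _ (/ x ^ n)), scal_sum. apply sum_eq. intros; ring. }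
  unfold coef_sum. rewrite (sum_eq _ _ _ Hrow).
  assert (Hpart : forall m, (m <= N)%nat ->
    sum_f_R0 (fun n => sum_f_R0 (fun k => d n k * ln x ^ k) n / x ^ n) m = d 0%nat 0%nat + asum a x m).
  { induction m as [|m IH]; intros Hm; [simpl; field|].
    rewrite tech5, IH by lia. cbn [asum]. unfold polyP.
    rewrite (sum_eq _ (fun k => a m k * ln (x) ^ k)) by (intros k _; rewrite Ha by lia; reflexivity).
    ring. }
  apply Hpart. lia.
Qed.


Lemma lp_coef_00 f l N :
  bigO (fun x => f x - 1) ell -> bigO (fun x => f x - lp_eval l x) (fun x => ell x ^ S N) ->
  lp_coef l 0 0 = 1.
Proof.
  intros H1 Hl. transitivity (lp_coef ((1, 0%nat, 0%nat) :: nil) 0 0); [|simpl; ring].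
  apply (lp_coef_agree f _ _ N 0); [exact Hl | | lia | lia].
  apply (bigO_rhs_ext _ _ _ (fun x => eq_sym (pow_1 (ell x)))).
  eapply bigO_ext; [|exact H1]. exists 0. intros. simpl. ring.
Qed.

Lemma bigO_sub_coef_sum f l N :
  bigO (fun x => f x - lp_eval l x) (fun x => ell x ^ S N) ->
  exists C, ultimately (fun x => Rabs (f x - coef_sum (lp_coef l) N N x) <= C * ln x ^ S N / x ^ S N).
Proof.
  intros [C HC]. exists (Rabs C + lp_norm l).
  eapply ultimately_mono; [|exact (ultimately_and _ _ HC (ultimately_ge (exp 1)))].
  intros x [Hb Hx]. destruct (ell_bounds x Hx) as (Hx0 & _ & Hi & _).
  replace ((Rabs C + lp_norm l) * ln x ^ S N / x ^ S N) with ((Rabs C + lp_norm l) * ell x ^ S N)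
    by (rewrite ell_pow by lra; unfold Rdiv; ring).
  pose proof (lp_eval_sub_coef_sum l N x Hx) as Htrunc.
  assert (C * ell x ^ S N <= Rabs C * ell x ^ S N)
    by (apply Rmult_le_compat_r; [apply pow_le; lra | apply Rle_abs]).
  pose proof (Rabs_triang (f x - lp_eval l x) (lp_eval l x - coef_sum (lp_coef l) N N x)) as Htri.
  replace (f x - lp_eval l x + (lp_eval l x - coef_sum (lp_coef l) N N x))
    with (f x - coef_sum (lp_coef l) N N x) in Htri by ring.
  lra.
Qed.

Theorem theorem3p1 (ali : R -> R) (Hali : is_ali ali) :
  exists a : nat -> nat -> R,
    forall N : nat,
      exists C X : R,
        forall x : R, X <= x ->
          Rabs (ali (exp x) / (x * exp x) - (1 + asum a x N))
            <= C * (ln x) ^ (S N) / x ^ (S N).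
Proof.
  destruct (choice (fun N l => bigO (fun x => ali_ratio ali x - lp_eval l x) (fun x => ell x ^ S N))
              (ali_ratio_expansion ali Hali)) as [L HL].
  exists (fun m k => lp_coef (L (S m)) (S m) k). intros N.
  destruct (bigO_sub_coef_sum _ _ _ (HL N)) as [C HC].
  destruct (ultimately_and _ _ HC (ultimately_ge 1)) as [X HX].
  exists C, X. intros x Hx. destruct (HX x Hx) as [Hb Hx1].
  rewrite <- (lp_coef_00 _ _ _ (bigO_ali_ratio_sub1 ali Hali) (HL N)), <- coef_sum_asum;
    [exact Hb | lra | apply lp_coef_gt |].
  intros m k Hm. apply (lp_coef_agree (ali_ratio ali) _ _ N (S m)); auto; lia.
Qed.
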